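(* For $d=3$ and $\lambda\ge 2/\sqrt3$, the only positive solution $z$ of the fixed-point equation $z=\phi_3(z,\lambda)$ is $$\mu_{3,\infty}(\lambda)=\frac{3\lambda^2+\lambda\sqrt{9\lambda^2-12}+4}{\sqrt{18\lambda^2+6\lambda\sqrt{9\lambda^2-12}}},$$ and the corresponding alignment $\alpha_{3,\infty}(\lambda)=\omega_3(\mu_{3,\infty}(\lambda),\lambda)$ equals $$\alpha_{3,\infty}(\lambda)=\sqrt{\frac12+\sqrt{\frac{3\lambda^2-4}{12\lambda^2}}}.$$
   Context: For $d=3$: $\beta_3=1/\sqrt{6}\cdot\sqrt{4}\,$ i.e. $\beta_3=2/\sqrt6$, and $m_3(z)=\frac{2}{\beta_3^2}\left(-z+z\sqrt{1-\beta_3^2/z^2}\right)=-3z+3\sqrt{z^2-2/3}$. The functions are $\omega_3(z,\lambda)=\frac1\lambda\left(z+\frac13 m_3(z/2)\right)=\frac1\lambda\left(\frac z2+\sqrt{\frac{z^2}{4}-\frac23}\right)$ and $\phi_3(z,\lambda)=\lambda\,\omega_3(z,\lambda)^3-\frac12 m_3(z/2)$. *)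

From mathcomp Require Import all_boot all_order all_algebra.
Set Implicit Arguments. Unset Strict Implicit. Unset Printing Implicit Defensive.
Import Order.TTheory GRing.Theory Num.Theory.
Local Open Scope ring_scope.

Definition m3 {R : rcfType} (z : R) : R := - (3 * z) + 3 * Num.sqrt (z ^+ 2 - 2 / 3).

Definition omega3 {R : rcfType} (z l : R) : R := l^-1 * (z + 3^-1 * m3 (z / 2)).

Definition phi3 {R : rcfType} (z l : R) : R := l * omega3 z l ^+ 3 - 2^-1 * m3 (z / 2).

Definition mu3 {R : rcfType} (l : R) : R :=
  (3 * l ^+ 2 + l * Num.sqrt (9 * l ^+ 2 - 12) + 4) /
  Num.sqrt (18 * l ^+ 2 + 6 * l * Num.sqrt (9 * l ^+ 2 - 12)).

Definition alpha3 {R : rcfType} (l : R) : R :=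
  Num.sqrt (2^-1 + Num.sqrt ((3 * l ^+ 2 - 4) / (12 * l ^+ 2))).

From mathcomp Require Import all_boot all_order all_algebra.
From mathcomp Require Import ring lra.
Set Implicit Arguments. Unset Strict Implicit. Unset Printing Implicit Defensive.
Import Order.TTheory GRing.Theory Num.Theory.
Local Open Scope ring_scope.

(* The square root in m3(z/2) is removed by the Joukowski-type
   substitution z = J b := b + 2/(3b) with b > 0 and 3b^2 >= 2: then
   sqrt((z/2)^2 - 2/3) = (b - 2/(3b))/2, and this substitution is a bijection
   onto the admissible z (z > 0, (z/2)^2 >= 2/3), with inverse
   b = z/2 + sqrt((z/2)^2 - 2/3).  In the variable b,
     omega3 (J b) l = b / l   and   phi3 (J b) l = b^3/l^2 + 1/b,
   so the fixed-point equation becomes the biquadratic 3b^4 - 3l^2 b^2 + l^2 = 0.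
   For 3l^2 >= 4 its roots in x = b^2 are (3l^2 +- l sqrt(9l^2-12))/6, and the
   constraint 3x >= 2 rules out the smaller one unless both coincide.  Hence
   the unique admissible b is a = sqrt(rho l) with rho l the larger root;
   finally mu3 l = J a and alpha3 l = a / l are closed-form computations. *)

Section Joukowski.
Variable R : rcfType.
Implicit Types b l x z : R.

Lemma sqrt_eq x z : 0 <= z -> z ^+ 2 = x -> Num.sqrt x = z.
Proof. by move=> hz <-; rewrite sqrtr_sqr ger0_norm. Qed.

Definition joukowski b : R := b + 2 / (3 * b).

Lemma joukowski_gt0 b : 0 < b -> 0 < joukowski b.
Proof. by move=> hb; rewrite /joukowski addr_gt0 // divr_gt0 // mulr_gt0. Qed.

(* (J b / 2)^2 - 2/3 is a perfect square, so J b is always admissible. *)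
Lemma joukowski_sqr b : b != 0 ->
  (joukowski b / 2) ^+ 2 - 2 / 3 = ((b - 2 / (3 * b)) / 2) ^+ 2.
Proof. by move=> hb; rewrite /joukowski; field. Qed.

Lemma joukowski_admissible b : 0 < b -> 2 / 3 <= (joukowski b / 2) ^+ 2.
Proof.
move=> hb; rewrite -subr_ge0 joukowski_sqr ?gt_eqF //; exact: sqr_ge0.
Qed.

Section Admissible.
Variable b : R.
Hypotheses (hb0 : 0 < b) (hb2 : 2 <= 3 * b ^+ 2).

Lemma sqrt_joukowski :
  Num.sqrt ((joukowski b / 2) ^+ 2 - 2 / 3) = (b - 2 / (3 * b)) / 2.
Proof.
apply: sqrt_eq; last by rewrite joukowski_sqr // gt_eqF.
have -> : b - 2 / (3 * b) = (3 * b ^+ 2 - 2) / (3 * b) by field; rewrite gt_eqF.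
by rewrite divr_ge0 // divr_ge0 ?subr_ge0 // mulr_ge0 // ltW.
Qed.

Lemma joukowskiK :
  joukowski b / 2 + Num.sqrt ((joukowski b / 2) ^+ 2 - 2 / 3) = b.
Proof. by rewrite sqrt_joukowski /joukowski; field; rewrite gt_eqF. Qed.

Lemma omega3_joukowski l : omega3 (joukowski b) l = b / l.
Proof.
rewrite /omega3 /m3 sqrt_joukowski mulrC; congr (_ / l).
by rewrite /joukowski; field; rewrite gt_eqF.
Qed.

Lemma phi3_joukowski l : phi3 (joukowski b) l = b ^+ 3 / l ^+ 2 + b^-1.
Proof.
rewrite /phi3 /m3 omega3_joukowski sqrt_joukowski /joukowski.
have [->|hl] := eqVneq l 0; last by field; rewrite hl gt_eqF.
by rewrite mul0r expr0n /= invr0 !mulr0 !add0r; field; rewrite gt_eqF.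
Qed.
End Admissible.

Lemma joukowski_onto z : 0 < z -> 2 / 3 <= (z / 2) ^+ 2 ->
  exists b, [/\ 0 < b, 2 <= 3 * b ^+ 2 & joukowski b = z].
Proof.
move=> hz hzw; set w := z / 2 in hzw; set S := Num.sqrt (w ^+ 2 - 2 / 3).
have hS0 : 0 <= S by exact: sqrtr_ge0.
have hS2 : S ^+ 2 = w ^+ 2 - 2 / 3 by rewrite sqr_sqrtr // subr_ge0.
have hw0 : 0 < w by rewrite divr_gt0.
have hb0 : 0 < w + S by rewrite ltr_wpDr.
exists (w + S); split => //; first by nra.
have conj_prod : 3 * (w + S) * (w - S) = 2.
  have -> : 3 * (w + S) * (w - S) = 3 * (w ^+ 2 - S ^+ 2) by ring.
  by rewrite hS2; field.
have inv_b : 2 / (3 * (w + S)) = w - S.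
  by rewrite -[X in X / _]conj_prod; field; rewrite gt_eqF.
by rewrite /joukowski inv_b /w; field.
Qed.

Lemma joukowski_inj b c : 0 < b -> 2 <= 3 * b ^+ 2 -> 0 < c -> 2 <= 3 * c ^+ 2 ->
  joukowski b = joukowski c -> b = c.
Proof.
by move=> hb0 hb2 hc0 hc2 hbc; rewrite -(joukowskiK hb0 hb2) hbc joukowskiK.
Qed.

Definition fp_poly l x : R := 3 * x ^+ 2 - 3 * l ^+ 2 * x + l ^+ 2.

Lemma joukowski_fixed_point b l : 0 < b -> l != 0 ->
  joukowski b = b ^+ 3 / l ^+ 2 + b^-1 <-> fp_poly l (b ^+ 2) = 0.
Proof.
move=> hb0 hl.
have hd : 3 * b * l ^+ 2 != 0 by rewrite !mulf_neq0 ?expf_neq0 ?pnatr_eq0 // gt_eqF.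
have diffE : joukowski b - (b ^+ 3 / l ^+ 2 + b^-1)
           = - fp_poly l (b ^+ 2) / (3 * b * l ^+ 2).
  by rewrite /joukowski /fp_poly; field; rewrite hl gt_eqF.
split => [fixb | root].
- move/eqP: diffE; rewrite fixb subrr eq_sym mulf_eq0 invr_eq0 (negbTE hd).
  by rewrite orbF oppr_eq0 => /eqP.
- by apply/eqP; rewrite -subr_eq0 diffE root oppr0 mul0r.
Qed.

End Joukowski.

Section Roots.
Variables (R : rcfType) (l : R).
Hypotheses (hl0 : 0 < l) (hl2 : 4 <= 3 * l ^+ 2).

(* The larger root of fp_poly l (as a quadratic in x); r = sqrt(9 l^2 - 12)
   is a third of the square root of its discriminant. *)
Definition rho : R := (3 * l ^+ 2 + l * Num.sqrt (9 * l ^+ 2 - 12)) / 6.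

Let r : R := Num.sqrt (9 * l ^+ 2 - 12).
Let r_ge0 : 0 <= r. Proof. exact: sqrtr_ge0. Qed.
Let r_sqr : r ^+ 2 = 9 * l ^+ 2 - 12.
Proof. by rewrite sqr_sqrtr //; move: hl2; lra. Qed.

Lemma rho_admissible : 2 <= 3 * rho.
Proof. by rewrite /rho -/r; move: hl0 hl2 r_ge0; nra. Qed.

(* For 3 l^2 >= 4 the admissible roots (3x >= 2) of fp_poly l reduce to rho:
   the smaller root is admissible only when it equals rho, i.e. r = 0. *)
Lemma fp_poly_root x : 2 <= 3 * x -> fp_poly l x = 0 <-> x = rho.
Proof.
move=> hx; set rho' := (3 * l ^+ 2 - l * r) / 6.
have factor : fp_poly l x = 3 * (x - rho) * (x - rho').
  have -> : fp_poly l x = 3 * (x - rho) * (x - rho')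
                         + l ^+ 2 * (r ^+ 2 - (9 * l ^+ 2 - 12)) / 12.
    by rewrite /fp_poly /rho -/r /rho'; field.
  by rewrite r_sqr subrr mulr0 mul0r addr0.
split => [root | xE]; last by rewrite factor xE subrr mulr0 mul0r.
move/eqP: root; rewrite factor !mulf_eq0 pnatr_eq0 !subr_eq0 /=.
case/orP=> [/eqP // | /eqP xE].
have r0 : r = 0.
  have small : l * r <= 3 * l ^+ 2 - 4 by move: hx; rewrite xE /rho'; lra.
  have lr_ge0 : 0 <= l * r by rewrite mulr_ge0 // ltW.
  have : (l * r) ^+ 2 <= (3 * l ^+ 2 - 4) ^+ 2 by nra.
  rewrite exprMn r_sqr => sq_small.
  have r_sqr0 : r ^+ 2 = 0 by move: hl2; rewrite r_sqr; nra.
  by apply/eqP; rewrite -sqrf_eq0 r_sqr0.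
by rewrite xE /rho' /rho -/r r0 mulr0 subr0 addr0.
Qed.

Lemma mu3_joukowski : mu3 l = joukowski (Num.sqrt rho).
Proof.
have rho_gt0 : 0 < rho by have := rho_admissible; lra.
set a := Num.sqrt rho; have a_gt0 : 0 < a by rewrite sqrtr_gt0.
have a_sqr : a ^+ 2 = rho by rewrite sqr_sqrtr // ltW.
rewrite /mu3 -/r (@sqrt_eq _ _ (6 * a)); first last.
- by rewrite exprMn a_sqr /rho -/r; field.
- by rewrite mulr_ge0 // ltW.
have -> : 3 * l ^+ 2 + l * r + 4 = 6 * a ^+ 2 + 4 by rewrite a_sqr /rho -/r; field.
by rewrite /joukowski; field; rewrite gt_eqF.
Qed.

Lemma alpha3_rho : alpha3 l = Num.sqrt rho / l.
Proof.
have hl : l != 0 by rewrite gt_eqF.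
rewrite /alpha3 (@sqrt_eq _ ((3 * l ^+ 2 - 4) / (12 * l ^+ 2)) (r / (6 * l))).
- apply: sqrt_eq; first by rewrite divr_ge0 ?sqrtr_ge0 // ltW.
  rewrite exprMn sqr_sqrtr; last by have := rho_admissible; lra.
  by rewrite /rho -/r; field.
- by rewrite divr_ge0 // mulr_ge0 // ltW.
- by rewrite exprMn r_sqr; field.
Qed.

End Roots.

Lemma lambda_bounds (R : rcfType) (l : R) :
  2 / Num.sqrt 3 <= l -> 0 < l /\ 4 <= 3 * l ^+ 2.
Proof.
set q := Num.sqrt (3 : R) => hl.
have q_gt0 : 0 < q by rewrite sqrtr_gt0; lra.
have q_sqr : q ^+ 2 = 3 by rewrite sqr_sqrtr //; lra.
have hlq : 2 <= l * q by rewrite -ler_pdivrMr.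
by split; nra.
Qed.

Theorem lemma1 (R : rcfType) (l : R) (hl : 2 / Num.sqrt 3 <= l) :
  [/\ 0 < mu3 l, 2 / 3 <= (mu3 l / 2) ^+ 2,
      (forall z : R, 0 < z -> 2 / 3 <= (z / 2) ^+ 2 ->
         (z = phi3 z l <-> z = mu3 l))
    & omega3 (mu3 l) l = alpha3 l].
Proof.
have [hl0 hl2] := lambda_bounds hl.
have rho_adm := rho_admissible hl0 hl2.
set a := Num.sqrt (rho l).
have a_sqr : a ^+ 2 = rho l by rewrite sqr_sqrtr //; lra.
have a_gt0 : 0 < a by rewrite sqrtr_gt0; lra.
have a_adm : 2 <= 3 * a ^+ 2 by rewrite a_sqr.
rewrite mu3_joukowski // -/a; split.
- exact: joukowski_gt0.
- exact: joukowski_admissible.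
- move=> z hz hzw; have [b [b_gt0 b_adm <-]] := joukowski_onto hz hzw.
  rewrite phi3_joukowski // joukowski_fixed_point ?gt_eqF //.
  rewrite fp_poly_root // -a_sqr; split => [b_sqr | /joukowski_inj-> //].
  by congr joukowski; apply/eqP; rewrite -(eqrXn2 (n := 2)) ?ltW // b_sqr.
- by rewrite omega3_joukowski // alpha3_rho.
Qed.
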